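(* Let $\Theta\subseteq\mathbb{R}^p$ be convex, and let $f:\mathbb{R}^p\to\mathbb{R}$ be continuous, convex and bounded below, with a minimizer $\theta^\star$ on $\Theta$; set $f^\star\triangleq f(\theta^\star)$. Let $\theta_0\in\Theta$ and consider the sequence generated by: for $n\ge1$, choose $g_n\in\mathcal{S}_{L,\rho}(f,\theta_{n-1})$ with $\rho\ge L$ and set $\theta_n\in\operatorname{arg\,min}_{\theta\in\Theta}g_n(\theta)$. Then for all $n\ge1$, $$f(\theta_n)-f^\star\le\frac{L\|\theta_0-\theta^\star\|_2^2}{2n}.$$ If moreover $f$ is $\mu$-strongly convex, then for all $n\ge1$, $$\|\theta_n-\theta^\star\|_2^2\le\Big(\frac{L}{\rho+\mu}\Big)^n\|\theta_0-\theta^\star\|_2^2,\qquad f(\theta_n)-f^\star\le\Big(\frac{L}{\rho+\mu}\Big)^{n-1}\frac{L\|\theta_0-\theta^\star\|_2^2}{2}.$$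
   Context: First-order surrogates: given convex $\Theta\subseteq\mathbb{R}^p$, $g:\mathbb{R}^p\to\mathbb{R}$ belongs to $\mathcal{S}_L(f,\kappa)$ if (a) $g(\theta')\ge f(\theta')$ for all $\theta'\in\operatorname{arg\,min}_{\theta\in\Theta}g(\theta)$, and (b) $h\triangleq g-f$ is differentiable on $\mathbb{R}^p$ with $L$-Lipschitz gradient, $h(\kappa)=0$ and $\nabla h(\kappa)=0$. $\mathcal{S}_{L,\rho}(f,\kappa)$ is the subset of $\rho$-strongly convex elements of $\mathcal{S}_L(f,\kappa)$. The minimizers $\theta_n$ are assumed to exist. *)

From HB Require Import structures.
From mathcomp Require Import all_boot all_order all_algebra.
From mathcomp Require Import all_classical all_reals.
From mathcomp Require Import topology normedtype derive.
Set Implicit Arguments. Unset Strict Implicit. Unset Printing Implicit Defensive.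
Import Order.TTheory GRing.Theory Num.Theory.
Import numFieldNormedType.Exports.
Local Open Scope classical_set_scope.
Local Open Scope ring_scope.

Section Defs.
Context {R : realType} {p : nat}.
Notation V := 'rV[R]_p.

Definition sqnorm (v : V) : R := \sum_(i < p) (v ord0 i) ^+ 2.
Definition enorm (v : V) : R := Num.sqrt (sqnorm v).

Definition convex_set (Theta : set V) : Prop :=
  forall x y (t : R), Theta x -> Theta y -> 0 <= t <= 1 ->
    Theta (t *: x + (1 - t) *: y).

Definition convex_fun (f : V -> R) : Prop :=
  forall x y (t : R), 0 <= t <= 1 ->
    f (t *: x + (1 - t) *: y) <= t * f x + (1 - t) * f y.

Definition strongly_convex (rho : R) (g : V -> R) : Prop :=
  convex_fun (fun x => g x - rho / 2 * sqnorm x).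

Definition is_argmin (Theta : set V) (g : V -> R) (x : V) : Prop :=
  Theta x /\ forall y, Theta y -> g x <= g y.

Definition grad (h : V -> R) (x : V) : V :=
  \row_(i < p) ('d h x (delta_mx ord0 i : V)).

Definition surrogate (Theta : set V) (L : R) (f : V -> R) (kappa : V)
    (g : V -> R) : Prop :=
  (forall th', is_argmin Theta g th' -> f th' <= g th') /\
  let h := fun x => g x - f x in
  (forall x, differentiable h x) /\
  (forall x y, enorm (grad h x - grad h y) <= L * enorm (x - y)) /\
  h kappa = 0 /\ grad h kappa = 0.

Definition sc_surrogate (Theta : set V) (L rho : R) (f : V -> R) (kappa : V)
    (g : V -> R) : Prop :=
  surrogate Theta L f kappa g /\ strongly_convex rho g.

End Defs.

(** The surrogate [g_n] majorizes [f] up to [L/2 ||. - theta_{n-1}||^2]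
    (descent lemma for the [L]-smooth error [g_n - f]), and its strong
    convexity makes its minimizer [theta_n] satisfy the three-point
    inequality
      [f theta_n + rho/2 ||theta_n - th||^2 <= f th + L/2 ||theta_{n-1} - th||^2]
    for every [th] in [Theta].  Taking [th = theta_{n-1}] shows that
    [f theta_n] decreases; taking [th = theta*] with [L <= rho] bounds the
    excess [f theta_n - f*] by a telescoping difference of
    [L/2 ||theta_k - theta*||^2], which gives the [O(1/n)] rate.  When [f]
    is [mu]-strongly convex, [f* + mu/2 ||theta_n - theta*||^2 <= f theta_n]
    turns the same inequality into a contraction of the distances by
    [L / (rho + mu)]. *)
From HB Require Import structures.
From mathcomp Require Import all_boot all_order all_algebra.
From mathcomp Require Import all_classical all_reals.
From mathcomp Require Import topology normedtype derive.
From mathcomp Require Import ring lra.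
Import Order.TTheory GRing.Theory Num.Theory.
Import numFieldNormedType.Exports.
Local Open Scope classical_set_scope.
Local Open Scope ring_scope.

Lemma ler_of_forall_mul_onem {R : realFieldType} (a b : R) :
  (forall t, 0 < t <= 1 -> b * (1 - t) <= a) -> b <= a.
Proof.
move=> hab; have a_ge0 : 0 <= a by have := hab 1; rewrite ltr01 lexx subrr mulr0; apply.
rewrite leNgt; apply/negP => ab; have b_gt0 : 0 < b := le_lt_trans a_ge0 ab.
have := hab ((b - a) / (2 * b)).
have -> : b * (1 - (b - a) / (2 * b)) = (a + b) / 2 by field; rewrite gt_eqF.
have t_gt0 : 0 < (b - a) / (2 * b) by rewrite divr_gt0 ?mulr_gt0 // subr_gt0.
have t_le1 : (b - a) / (2 * b) <= 1 by rewrite ler_pdivrMr ?mulr_gt0 //; lra.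
rewrite t_gt0 t_le1 => /(_ isT); lra.
Qed.

Lemma geometric_bound {R : realDomainType} (d : nat -> R) (c : R) :
  0 <= c -> (forall n, d n.+1 <= c * d n) -> forall n, d n <= c ^+ n * d 0%N.
Proof.
move=> c_ge0 dS; elim=> [|n IH]; first by rewrite expr0 mul1r.
by rewrite (le_trans (dS n)) // exprS -mulrA ler_wpM2l.
Qed.

Lemma telescoping_rate {R : realDomainType} (e d : nat -> R) (C : R) :
  (forall n, e n.+1 <= e n) ->
  (forall n, e n.+1 <= C * (d n - d n.+1)) ->
  (forall n, 0 <= C * d n) ->
  forall n, n.+1%:R * e n.+1 <= C * d 0%N.
Proof.
move=> e_noninc e_tele Cd_ge0 n.
suff sum_bound : n.+1%:R * e n.+1 <= C * (d 0%N - d n.+1).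
  by rewrite (le_trans sum_bound) // mulrBr lerBlDr lerDl.
elim: n => [|n IH]; first by rewrite mul1r.
rewrite -natr1 mulrDl mul1r.
have : n.+1%:R * e n.+2 <= n.+1%:R * e n.+1 by rewrite ler_wpM2l.
have := e_tele n.+1; rewrite !mulrBr in IH *; lra.
Qed.

Section EuclideanRow.
Context {R : realType} {p : nat}.
Notation V := 'rV[R]_p.

Lemma sqnorm_ge0 (v : V) : 0 <= sqnorm v.
Proof. by apply: sumr_ge0 => i _; rewrite sqr_ge0. Qed.

Lemma sqnorm_eq0 (v : V) : (sqnorm v == 0) = (v == 0).
Proof.
apply/idP/eqP => [|->]; last by rewrite /sqnorm big1 // => i _; rewrite mxE expr0n.
rewrite /sqnorm psumr_eq0 => [/allP v0|i _]; last exact: sqr_ge0.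
apply/rowP => i; have := v0 i (mem_index_enum i).
by rewrite /= sqrf_eq0 mxE => /eqP.
Qed.

Lemma sqnorm0 : sqnorm (0 : V) = 0.
Proof. by apply/eqP; rewrite sqnorm_eq0. Qed.

Lemma sqnormZ (t : R) (v : V) : sqnorm (t *: v) = t ^+ 2 * sqnorm v.
Proof. by rewrite /sqnorm mulr_sumr; apply: eq_bigr => i _; rewrite mxE exprMn. Qed.

Lemma sqnormN (v : V) : sqnorm (- v) = sqnorm v.
Proof. by rewrite -scaleN1r sqnormZ sqrrN expr1n mul1r. Qed.

Lemma sqnormB_sym (x y : V) : sqnorm (x - y) = sqnorm (y - x).
Proof. by rewrite -sqnormN opprB. Qed.

Lemma sqnorm_convex_comb (x y : V) t :
  sqnorm (t *: x + (1 - t) *: y) =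
  t * sqnorm x + (1 - t) * sqnorm y - t * (1 - t) * sqnorm (x - y).
Proof.
rewrite /sqnorm !mulr_sumr -big_split /= -sumrB.
by apply: eq_bigr => i _; rewrite !mxE; ring.
Qed.

Lemma enorm_ge0 (v : V) : 0 <= enorm v.
Proof. exact: sqrtr_ge0. Qed.

Lemma sqr_enorm (v : V) : enorm v ^+ 2 = sqnorm v.
Proof. by rewrite sqr_sqrtr // sqnorm_ge0. Qed.

(* Young's inequality [a_i b_i <= (k a_i^2 + b_i^2 / k) / 2], summed over [i]. *)
Lemma dot_le_of_sqnorm_le (a b : V) (k : R) :
  0 <= k -> sqnorm b <= k ^+ 2 * sqnorm a ->
  \sum_(i < p) a ord0 i * b ord0 i <= k * sqnorm a.
Proof.
rewrite le_eqVlt => /predU1P[<- | k_gt0] hb.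
  have /eqP -> : b == 0.
    by rewrite -sqnorm_eq0 eq_le sqnorm_ge0 andbT; rewrite expr0n mul0r in hb.
  by rewrite mul0r big1 // => i _; rewrite mxE mulr0.
have young i : a ord0 i * b ord0 i <= (k * a ord0 i ^+ 2 + b ord0 i ^+ 2 / k) / 2.
  have : 0 <= (k * a ord0 i - b ord0 i) ^+ 2 / (2 * k).
    by rewrite divr_ge0 ?sqr_ge0 // mulr_ge0 // ltW.
  have -> : (k * a ord0 i - b ord0 i) ^+ 2 / (2 * k) =
      (k * a ord0 i ^+ 2 + b ord0 i ^+ 2 / k) / 2 - a ord0 i * b ord0 i.
    by field; rewrite gt_eqF.
  by rewrite subr_ge0.
apply: le_trans (ler_sum _ (fun i _ => young i)) _.
rewrite -mulr_suml big_split /= -mulr_sumr -mulr_suml -/(sqnorm a) -/(sqnorm b).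
have : sqnorm b / k <= k * sqnorm a by rewrite ler_pdivrMr // mulrAC -expr2.
lra.
Qed.

Lemma diff_grad_dot (h : V -> R) (x v : V) :
  'd h x v = \sum_(i < p) v ord0 i * grad h x ord0 i.
Proof.
rewrite {1}(row_sum_delta v) linear_sum; apply: eq_bigr => i _.
by rewrite linearZ /= mxE.
Qed.

Lemma lipschitz_const_ge0 {F : V -> V} {L : R} (v : V) : v != 0 ->
  (forall x y, enorm (F x - F y) <= L * enorm (x - y)) -> 0 <= L.
Proof.
move=> v0 lipF; have := lipF v 0; rewrite subr0.
have enorm_v_gt0 : 0 < enorm v by rewrite sqrtr_gt0 lt_def sqnorm_eq0 v0 sqnorm_ge0.
by rewrite -(pmulr_lge0 _ enorm_v_gt0); apply: le_trans; apply: sqrtr_ge0.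
Qed.

Lemma derive_along_line {h : V -> R} (kappa v : V) {t : R} :
  differentiable h (t *: v + kappa) ->
  derivable (fun s : R => h (s *: v + kappa)) t 1 /\
  'D_1 (fun s : R => h (s *: v + kappa)) t = 'd h (t *: v + kappa) v.
Proof.
move=> dh; set y := t *: v + kappa.
have quotients_eq :
    (fun s : R => s^-1 *: (((fun s : R => h (s *: v + kappa)) \o shift t) (s *: 1) - h y))
  = (fun s : R => s^-1 *: ((h \o shift y) (s *: v) - h y)).
  apply/funext => s /=; congr (_ *: (h _ - _)).
  by rewrite /y -[s%:A]/(s * 1) mulr1 scalerDl addrA.
split; first by rewrite /derivable quotients_eq; exact: diff_derivable.
by rewrite -deriveE // /derive quotients_eq.
Qed.

(* The descent lemma: compare [s |-> h (kappa + s (x - kappa))] with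
   [s |-> L/2 s^2 ||x - kappa||^2], whose derivative dominates on [0, 1]. *)
Lemma lipschitz_grad_quadratic_bound {h : V -> R} {L : R} {kappa : V} (x : V) :
  0 <= L -> (forall y, differentiable h y) ->
  (forall y z, enorm (grad h y - grad h z) <= L * enorm (y - z)) ->
  h kappa = 0 -> grad h kappa = 0 ->
  h x <= L / 2 * sqnorm (x - kappa).
Proof.
move=> L_ge0 dh lip hk gk.
set v := x - kappa; set c := L / 2 * sqnorm v.
pose phi := fun s : R => h (s *: v + kappa).
pose q := c *: (@GRing.exp R ^~ 2).
have dq t : derivable q t 1 /\ 'D_1 q t = c * (2 * t).
  split; first by apply: derivableZ; exact: ex_derive.
  rewrite deriveZ /=; last exact: ex_derive.
  by rewrite exp_derive /= expr1 -[(_ *: t)%:A]/((2%:R *: t) * 1) mulr1.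
have dphi t := derive_along_line kappa v (dh (t *: v + kappa)).
have slope_bound t : 0 <= t -> 'd h (t *: v + kappa) v <= L * t * sqnorm v.
  move=> t_ge0; rewrite diff_grad_dot.
  apply: dot_le_of_sqnorm_le; first by rewrite mulr_ge0.
  have := lip (t *: v + kappa) kappa; rewrite gk subr0 addrK => hl.
  have : enorm (grad h (t *: v + kappa)) ^+ 2 <= (L * enorm (t *: v)) ^+ 2.
    by rewrite ler_sqr ?nnegrE ?mulr_ge0 ?enorm_ge0 //; apply: hl.
  rewrite [(L * _) ^+ 2]exprMn !sqr_enorm sqnormZ => hh.
  by rewrite exprMn -mulrA.
have : (phi - q) 1 <= (phi - q) 0.
  apply: (@ler0_derive1_le_cc _ (phi - q) 0 1);
    rewrite ?in_itv /= ?lexx ?ler01 //.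
  - move=> t _; apply: derivableB; [exact: (dphi t).1 | exact: (dq t).1].
  - move=> t; rewrite in_itv /= => /andP [t_gt0 _].
    rewrite derive1E deriveB; [|exact: (dphi t).1|exact: (dq t).1].
    rewrite (dphi t).2 (dq t).2.
    have := slope_bound t (ltW t_gt0); rewrite /c; lra.
  - apply: continuous_subspaceT => t.
    apply: differentiable_continuous; apply/derivable1_diffP.
    by apply: derivableB; [exact: (dphi t).1 | exact: (dq t).1].
move=> psi_noninc.
have : h (1 *: v + kappa) - c * 1 ^+ 2 <= h (0 *: v + kappa) - c * 0 ^+ 2 := psi_noninc.
rewrite scale1r scale0r add0r hk /v subrK expr1n expr0n /= mulr1 mulr0; lra.
Qed.

Lemma strongly_convex_argmin_growth {Theta : set V} {g : V -> R} {rho : R} {x y : V} :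
  convex_set Theta -> strongly_convex rho g -> is_argmin Theta g x -> Theta y ->
  g x + rho / 2 * sqnorm (y - x) <= g y.
Proof.
move=> convT scg [Tx x_min] Ty.
suff : rho / 2 * sqnorm (y - x) <= g y - g x by lra.
apply: ler_of_forall_mul_onem => t /andP [t_gt0 t_le1].
have t01 : 0 <= t <= 1 by rewrite ltW.
have := x_min _ (convT y x t Ty Tx t01).
have := scg y x t t01; rewrite /= sqnorm_convex_comb => sc_ineq min_ineq.
have : 0 <= t * ((g y - g x) - rho / 2 * sqnorm (y - x) * (1 - t)) by nra.
by rewrite pmulr_rge0 // subr_ge0.
Qed.

End EuclideanRow.

Section MajorizationMinimization.
Variables (R : realType) (p : nat) (Theta : set 'rV[R]_p) (f : 'rV[R]_p -> R).
Variables (thstar : 'rV[R]_p) (L rho : R).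
Variables (g : nat -> 'rV[R]_p -> R) (theta : nat -> 'rV[R]_p).
Hypothesis convT : convex_set Theta.
Hypothesis thstar_min : is_argmin Theta f thstar.
Hypothesis theta0_in : Theta (theta 0%N).
Hypothesis L_ge0 : 0 <= L.
Hypothesis L_le_rho : L <= rho.
Hypothesis mm_step : forall n, sc_surrogate Theta L rho f (theta n) (g n.+1) /\
  is_argmin Theta (g n.+1) (theta n.+1).

Local Notation dist n := (sqnorm (theta n - thstar)).
Local Notation excess n := (f (theta n) - f thstar).

Lemma mm_iterate_in n : Theta (theta n).
Proof. by case: n => // n; have [_ []] := mm_step n. Qed.

Lemma mm_three_point n th : Theta th ->
  f (theta n.+1) + rho / 2 * sqnorm (theta n.+1 - th)
    <= f th + L / 2 * sqnorm (theta n - th).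
Proof.
move=> Tth; have [[[majorizes [dh [lip [hk gk]]]] scg] gmin] := mm_step n.
have := majorizes _ gmin.
have := strongly_convex_argmin_growth convT scg gmin Tth.
have /= := lipschitz_grad_quadratic_bound th L_ge0 dh lip hk gk.
rewrite (sqnormB_sym (theta n.+1)) (sqnormB_sym (theta n)); lra.
Qed.

Lemma mm_value_noninc n : f (theta n.+1) <= f (theta n).
Proof.
have := mm_three_point n _ (mm_iterate_in n); rewrite subrr sqnorm0 mulr0 addr0.
have : 0 <= rho / 2 * sqnorm (theta n.+1 - theta n).
  by rewrite mulr_ge0 ?sqnorm_ge0 // divr_ge0 // (le_trans L_ge0).
lra.
Qed.

Lemma mm_excess_telescope n : excess n.+1 <= L / 2 * (dist n - dist n.+1).
Proof.
have := mm_three_point n _ thstar_min.1.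
have : L * dist n.+1 <= rho * dist n.+1 by rewrite ler_wpM2r ?sqnorm_ge0.
lra.
Qed.

Lemma mm_sublinear_rate n :
  excess n.+1 <= L * dist 0%N / (2 * n.+1%:R).
Proof.
have := @telescoping_rate _ (fun k => excess k) (fun k => dist k) (L / 2) _
  mm_excess_telescope _ n.
rewrite ler_pdivlMr ?mulr_gt0 //.
have -> : excess n.+1 * (2 * n.+1%:R) = 2 * (n.+1%:R * excess n.+1) by ring.
have -> : L * dist 0%N = 2 * (L / 2 * dist 0%N) by field.
rewrite ler_pM2l //; apply.
- by move=> k; rewrite lerD2r mm_value_noninc.
- by move=> k; rewrite mulr_ge0 ?divr_ge0 ?sqnorm_ge0.
Qed.

Variables (mu : R).
Hypothesis mu_gt0 : 0 < mu.
Hypothesis f_sc : strongly_convex mu f.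

Lemma mm_dist_contraction n : (rho + mu) * dist n.+1 <= L * dist n.
Proof.
have := mm_three_point n _ thstar_min.1.
have := strongly_convex_argmin_growth convT f_sc thstar_min (mm_iterate_in n.+1).
rewrite sqnormB_sym; lra.
Qed.

Lemma mm_dist_linear_rate n : dist n <= (L / (rho + mu)) ^+ n * dist 0%N.
Proof.
have rho_mu_gt0 : 0 < rho + mu by rewrite ltr_wpDl // (le_trans L_ge0).
apply: (@geometric_bound _ (fun k => dist k)) => [|k].
  by rewrite divr_ge0 // ltW.
by rewrite mulrAC ler_pdivlMr // mulrC mm_dist_contraction.
Qed.

Lemma mm_value_linear_rate n :
  excess n.+1 <= (L / (rho + mu)) ^+ n * (L * dist 0%N / 2).
Proof.
apply: le_trans (mm_excess_telescope n) _.
have : L / 2 * dist n <= L / 2 * ((L / (rho + mu)) ^+ n * dist 0%N).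
  by rewrite ler_wpM2l ?mm_dist_linear_rate ?divr_ge0.
have : 0 <= L / 2 * dist n.+1 by rewrite mulr_ge0 ?divr_ge0 ?sqnorm_ge0.
lra.
Qed.

End MajorizationMinimization.

Theorem proposition2p3 (R : realType) (p : nat) (Theta : set 'rV[R]_p)
  (f : 'rV[R]_p -> R) (thstar : 'rV[R]_p) (L rho : R)
  (g : nat -> 'rV[R]_p -> R) (theta : nat -> 'rV[R]_p) :
  convex_set Theta ->
  continuous f -> convex_fun f -> (exists b : R, forall x, b <= f x) ->
  is_argmin Theta f thstar ->
  Theta (theta 0%N) ->
  L <= rho ->
  (forall n : nat, (1 <= n)%N ->
     sc_surrogate Theta L rho f (theta n.-1) (g n) /\
     is_argmin Theta (g n) (theta n)) ->
  (forall n : nat, (1 <= n)%N ->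
     f (theta n) - f thstar
       <= L * sqnorm (theta 0%N - thstar) / (2 * n%:R)) /\
  (forall mu : R, 0 < mu -> strongly_convex mu f ->
     forall n : nat, (1 <= n)%N ->
       sqnorm (theta n - thstar)
         <= (L / (rho + mu)) ^+ n * sqnorm (theta 0%N - thstar) /\
       f (theta n) - f thstar
         <= (L / (rho + mu)) ^+ n.-1 * (L * sqnorm (theta 0%N - thstar) / 2)).
Proof.
move=> convT _ _ _ thstar_min theta0_in L_le_rho mm_step.
have step n : sc_surrogate Theta L rho f (theta n) (g n.+1) /\
    is_argmin Theta (g n.+1) (theta n.+1) := mm_step n.+1 isT.
have [p0|p_gt0] := posnP p.
  subst p; have theta_star n : theta n = thstar by rewrite !thinmx0.
  by split=> [n _|mu _ _ n _]; rewrite !theta_star !subrr sqnorm0 !(mulr0, mul0r).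
have L_ge0 : 0 <= L.
  have [[[_ [_ [lip _]]] _] _] := step 0%N.
  apply: (lipschitz_const_ge0 (const_mx 1) _ lip).
  apply/eqP => /rowP /(_ (Ordinal p_gt0)).
  by rewrite !mxE => /eqP; rewrite oner_eq0.
split=> [[|n] // _ | mu mu_gt0 f_sc [|n] // _].
  exact: mm_sublinear_rate convT thstar_min theta0_in L_ge0 L_le_rho step n.
split.
- exact: mm_dist_linear_rate convT thstar_min theta0_in L_ge0 L_le_rho step
    mu mu_gt0 f_sc n.+1.
- exact: mm_value_linear_rate convT thstar_min theta0_in L_ge0 L_le_rho step
    mu mu_gt0 f_sc n.
Qed.
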